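(* For every integer $k\ge0$, the following identity of rational functions in $x$ and $q$ holds: \[ \tilde\sigma_{-k-1}=(1-x^{-1})\sum_{j=-k}^{k}\frac{R_{k,j}}{x+x^{-1}-q^j-q^{-j}},\qquad R_{k,j}=-\frac{(-1)^{k+j}q^{\binom{j+1}{2}+\binom{k+1}{2}}}{(q;q)_{k-j}(q;q)_{k+j}}, \] where $\tilde\sigma_{-k-1}=\frac{(-1)^kq^{\binom{k+1}{2}}}{(x;q)_{k+1}(qx^{-1};q)_k}$ and $\binom{j+1}{2}=\frac{j(j+1)}{2}$ for all $j\in\mathbb{Z}$.
   Context: $(a;q)_n=\prod_{j=0}^{n-1}(1-aq^j)$. The quantity $R_{k,j}$ is the residue of $\tilde\sigma_{-k-1}(x)\,dx$ at $x=q^j$. *)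

From mathcomp Require Import all_boot all_order all_algebra.
Set Implicit Arguments. Unset Strict Implicit. Unset Printing Implicit Defensive.
Import Order.TTheory GRing.Theory Num.Theory.
Local Open Scope ring_scope.

Definition qpoch (F : fieldType) (a q : F) (n : nat) : F :=
  \prod_(j < n) (1 - a * q ^+ j).

(* binom(j+1, 2) = j(j+1)/2 for all integers j (always an integer). *)
Definition tri (j : int) : int := ((j * (j + 1)) %/ 2)%Z.

Definition tsigma (F : fieldType) (k : nat) (x q : F) : F :=
  (-1) ^+ k * q ^ tri k%:Z / (qpoch x q k.+1 * qpoch (q / x) q k).

(* R_{k,j} = - (-1)^{k+j} q^{binom(j+1,2)+binom(k+1,2)} / ((q;q)_{k-j} (q;q)_{k+j}),
   for -k <= j <= k (so k-j, k+j >= 0, taken as naturals via absz). *)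
Definition Rkj (F : fieldType) (k : nat) (j : int) (q : F) : F :=
  - ((-1) ^ (k%:Z + j) * q ^ (tri j + tri k%:Z)
     / (qpoch q q (absz (k%:Z - j)) * qpoch q q (absz (k%:Z + j)))).

From mathcomp Require Import all_boot all_order all_algebra.
From mathcomp Require Import zify ring.
Import Order.TTheory GRing.Theory Num.Theory.
Set Implicit Arguments. Unset Strict Implicit. Unset Printing Implicit Defensive.
Local Open Scope ring_scope.

(* Write y = x + x^-1 and c_m = q^m + q^-m ([qcosh m]).  Pairing factors as
   (1 - x q^m) (1 - q^m / x) = - q^m (y - c_m) shows that tsigma_{-k-1} equals
   - (1 - x^-1) / prod_{m <= k} (y - c_m), a rational function of y with simple
   poles at c_0, ..., c_k.  Its partial fraction weights 1 / prod_{l <> m} (c_m - c_l)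
   are q-Pochhammer quotients, because c_m - c_l = q^-m (1 - q^(m-l)) (1 - q^(m+l));
   the weight at c_m is - R_{k,0} for m = 0 and - (R_{k,m} + R_{k,-m}) for m > 0.
   The summands j and -j of the right-hand side share the denominator y - c_|j|,
   so the two expansions agree. *)

Section PartialFractions.
Variables (F : fieldType) (n : nat) (d : 'I_n.+1 -> F).
Hypothesis d_inj : injective d.

Lemma node_gap_neq0 i : \prod_(j | j != i) (d i - d j) != 0.
Proof. by apply/prodf_neq0 => j ji; rewrite subr_eq0 (inj_eq d_inj) eq_sym. Qed.

Lemma horner_node_poly i y :
  (\prod_(j | j != i) ('X - (d j)%:P)).[y] = \prod_(j | j != i) (y - d j).
Proof. by rewrite horner_prod; apply: eq_bigr => j _; rewrite hornerXsubC. Qed.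

Lemma size_node_poly i : size (\prod_(j | j != i) ('X - (d j)%:P)) = n.+1.
Proof.
rewrite -big_filter size_prod_XsubC size_filter; congr _.+1.
by rewrite -[RHS]/(n.+1.-1) -[in RHS](card_ord n.+1) -(cardC1 i) cardE /enum_mem size_filter.
Qed.

Lemma horner_lagrange_sum l :
  (\sum_i (\prod_(j | j != i) (d i - d j))^-1 *: \prod_(j | j != i) ('X - (d j)%:P)).[d l]
  = 1.
Proof.
rewrite horner_sum (bigD1 l) //= [X in _ + X]big1 => [|i il].
  by rewrite addr0 hornerZ horner_node_poly mulVf ?node_gap_neq0.
by rewrite hornerZ horner_node_poly [X in _ * X](bigD1 l) 1?eq_sym //= subrr mul0r mulr0.
Qed.

Lemma lagrange_sum_eq1 :
  \sum_i (\prod_(j | j != i) (d i - d j))^-1 *: \prod_(j | j != i) ('X - (d j)%:P)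
  = 1 :> {poly F}.
Proof.
apply/eqP; rewrite -subr_eq0; apply/eqP.
apply: (@roots_geq_poly_eq0 _ _ (codom d)).
- apply/allP => _ /codomP [l ->].
  by rewrite /root hornerD hornerN hornerC horner_lagrange_sum subrr.
- exact/injectiveP.
rewrite size_codom card_ord.
apply: leq_trans (size_polyD _ _) _.
rewrite size_polyN size_polyC oner_neq0 geq_max andbT.
apply: leq_trans (size_sum _ _ _) _.
apply/bigmax_leqP => i _.
by rewrite (leq_trans (size_scale_leq _ _)) ?size_node_poly.
Qed.

Lemma partial_fractions y : (forall i, y != d i) ->
  (\prod_i (y - d i))^-1 = \sum_i (\prod_(j | j != i) (d i - d j))^-1 / (y - d i).
Proof.
move=> y_neq.
have prod_neq0 i : \prod_(j | j != i) (y - d j) != 0.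
  by apply/prodf_neq0 => j _; rewrite subr_eq0.
have sum_eq1 :
    \sum_i (\prod_(j | j != i) (d i - d j))^-1 * \prod_(j | j != i) (y - d j) = 1.
  rewrite -[RHS](hornerC 1 y) polyC1 -lagrange_sum_eq1 horner_sum.
  by apply: eq_bigr => i _; rewrite hornerZ horner_node_poly.
rewrite -[LHS]mul1r -[X in X * _]sum_eq1 mulr_suml; apply: eq_bigr => i _.
by rewrite [X in _ * X^-1](bigD1 i) //= invfM mulrACA mulfV ?prod_neq0 ?mulr1.
Qed.

End PartialFractions.

Lemma invf_eq_div (F : fieldType) (a b c : F) : a * b = c -> c != 0 -> a^-1 = b / c.
Proof.
move=> <-; rewrite mulf_eq0 negb_or => /andP[a_neq0 b_neq0].
by rewrite invfM mulrCA mulfV ?mulr1.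
Qed.

Lemma sum_centered (V : zmodType) (g : int -> V) k :
  \sum_(i < (2 * k).+1) g (i%:Z - k%:Z) = g 0 + \sum_(m < k) (g m.+1%:Z + g (- m.+1%:Z)).
Proof.
elim: k => [|k IH]; first by rewrite big_ord1 big_ord0 subr0 addr0.
have shift (i : nat) : (bump 0 i)%:Z - k.+1%:Z = i%:Z - k%:Z by rewrite /bump; lia.
rewrite mulnS big_ord_recl big_ord_recr /= [in RHS]big_ord_recr /=.
under eq_bigr do rewrite shift.
rewrite IH sub0r (_ : (bump 0 (2 * k).+1)%:Z - k.+1%:Z = k.+1%:Z); last by rewrite /bump; lia.
by rewrite [LHS]addrC -!addrA.
Qed.

Lemma triS (j : int) : tri (j + 1) = tri j + (j + 1).
Proof.
rewrite /tri.
have -> : (j + 1) * (j + 1 + 1) = (j + 1) * 2 + j * (j + 1) by ring.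
by rewrite divzMDl // addrC.
Qed.

Lemma triN (j : int) : tri (- j) = tri j - j.
Proof.
have -> : tri (- j) = tri (j - 1) by rewrite /tri; congr (_ %/ _)%Z; ring.
by have := triS (j - 1); rewrite subrK => ->; ring.
Qed.

Lemma tri_double (n : nat) : tri n + tri n = (n * n.+1)%N.
Proof.
elim: n => [//|n IH].
rewrite -addn1 PoszD triS addrACA IH; lia.
Qed.

Section QAnalogues.
Variables (F : fieldType) (q : F).

Lemma qpochS a n : qpoch a q n.+1 = qpoch a q n * (1 - a * q ^+ n).
Proof. by rewrite /qpoch big_ord_recr. Qed.

Lemma qpoch_recl a n : qpoch a q n.+1 = (1 - a) * qpoch (a * q) q n.
Proof.
by rewrite /qpoch big_ord_recl expr0 mulr1; under eq_bigr do rewrite exprS mulrA.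
Qed.

Lemma qpochD a m n : qpoch a q (m + n) = qpoch a q m * qpoch (a * q ^+ m) q n.
Proof.
rewrite /qpoch big_split_ord; congr (_ * _); apply: eq_bigr => i _.
by rewrite exprD mulrA.
Qed.

Lemma qpoch0 a : qpoch a q 0 = 1.
Proof. exact: big_ord0. Qed.

Lemma qpoch_factor_neq0 a n i : qpoch a q n != 0 -> (i < n)%N -> 1 - a * q ^+ i != 0.
Proof. by move=> /prodf_neq0 nz lt_in; apply: (nz (Ordinal lt_in)). Qed.

Lemma qpoch_qS n : qpoch q q n.+1 = qpoch q q n * (1 - q ^+ n.+1).
Proof. by rewrite qpochS exprS. Qed.

Lemma qpoch_double m : (0 < m)%N ->
  qpoch q q m * qpoch (q ^+ m) q m * (1 + q ^+ m) = qpoch q q (m + m).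
Proof.
case: m => // s _; rewrite qpochD -mulrA; congr (_ * _).
rewrite qpoch_recl qpochS [q ^+ s.+1 * q]mulrC [in RHS]mulrAC -[q * q ^+ s]exprS.
ring.
Qed.

Definition qcosh (m : nat) : F := q ^+ m + q ^- m.

Definition qcosh_gap (k m : nat) : F :=
  \prod_(l < k.+1 | l != m :> nat) (qcosh m - qcosh l).

Lemma qcosh_gapS k m : (m <= k)%N ->
  qcosh_gap k.+1 m = qcosh_gap k m * (qcosh m - qcosh k.+1).
Proof.
move=> le_mk; rewrite /qcosh_gap big_mkcond big_ord_recr /= -big_mkcond /=.
by rewrite ifT // neq_ltn ltnS le_mk orbT.
Qed.

Lemma qcosh_gap_diag m : qcosh_gap m m = \prod_(l < m) (qcosh m - qcosh l).
Proof.
rewrite /qcosh_gap big_mkcond big_ord_recr /= eqxx mulr1.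
by apply: eq_bigr => l _; rewrite neq_ltn ltn_ord.
Qed.

Lemma sub_exprz_qcosh y m : y - q ^ m%:Z - q ^ (- m%:Z) = y - qcosh m.
Proof. by rewrite -exprnP -exprnN /qcosh opprD addrA. Qed.

Lemma sub_exprNz_qcosh y m : y - q ^ (- m%:Z) - q ^ (- - m%:Z) = y - qcosh m.
Proof. by rewrite opprK addrAC sub_exprz_qcosh. Qed.

Hypothesis q_neq0 : q != 0.

Lemma expz_triS (n : nat) : q ^ tri n.+1 = q ^ tri n * q ^+ n.+1.
Proof. by rewrite -addn1 PoszD triS expfzDr // -PoszD addn1. Qed.

Lemma expz_tri_double (n : nat) : q ^ tri n * q ^ tri n = q ^+ (n * n.+1).
Proof. by rewrite -expfzDr // tri_double. Qed.

Lemma qcosh_sub l m : (l <= m)%N ->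
  qcosh m - qcosh l = q ^- m * ((1 - q ^+ (m - l)) * (1 - q ^+ (m + l))).
Proof.
move=> le_lm; rewrite /qcosh -(subnKC le_lm) addKn !exprD.
have ql_neq0 : q ^+ l != 0 by rewrite expf_neq0.
have qml_neq0 : q ^+ (m - l) != 0 by rewrite expf_neq0.
by field; rewrite ql_neq0 qml_neq0.
Qed.

Lemma qcosh_subNr l m : (l <= m)%N ->
  (qcosh l - qcosh m) * - q ^+ m = (1 - q ^+ (m - l)) * (1 - q ^+ (m + l)).
Proof.
move=> le_lm; rewrite -opprB qcosh_sub // mulrNN mulrC mulrA mulfV ?mul1r //.
by rewrite expf_neq0.
Qed.

Lemma qcosh_gap_shift m n :
  qcosh_gap (m + n) m * ((-1) ^+ n * q ^ tri (m + n)%N) * qpoch q q (m + m) =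
  qcosh_gap m m * q ^ tri m * qpoch q q n * qpoch q q (m + m + n).
Proof.
elim: n => [|n IH]; first by rewrite !addn0 qpoch0 expr0 mul1r mulr1 mulrAC.
rewrite !addnS qcosh_gapS ?leq_addr // expz_triS !qpoch_qS exprS.
transitivity (qcosh_gap (m + n) m * ((-1) ^+ n * q ^ tri (m + n)%N) * qpoch q q (m + m)
              * ((qcosh m - qcosh (m + n).+1) * - q ^+ (m + n).+1)); first by ring.
rewrite IH qcosh_subNr; last by lia.
have -> : ((m + n).+1 - m = n.+1)%N by lia.
have -> : ((m + n).+1 + m = (m + m + n).+1)%N by lia.
ring.
Qed.

Lemma qcosh_gap_diag_qpoch m : (0 < m)%N ->
  qcosh_gap m m * (q ^ tri m * q ^ tri m * (1 + q ^- m)) = qpoch q q (m + m).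
Proof.
move=> m_gt0; rewrite qcosh_gap_diag expz_tri_double -qpoch_double //.
under eq_bigr => l _ do rewrite qcosh_sub 1?ltnW //.
rewrite !big_split /= prodr_const card_ord.
have -> : \prod_(l < m) (1 - q ^+ (m - l)) = qpoch q q m.
  rewrite (reindex_inj rev_ord_inj) /=; apply: eq_bigr => l _.
  by rewrite subKn // exprS.
have -> : \prod_(l < m) (1 - q ^+ (m + l)) = qpoch (q ^+ m) q m.
  by apply: eq_bigr => l _; rewrite exprD.
rewrite exprVn mulnSr exprD exprM.
have qm_neq0 : q ^+ m != 0 by rewrite expf_neq0.
have qmm_neq0 : q ^+ m ^+ m != 0 by rewrite expf_neq0.
by field; rewrite qm_neq0 qmm_neq0.
Qed.

Lemma qcosh_gap0_qpoch k : qcosh_gap k 0 * ((-1) ^+ k * q ^ tri k) = qpoch q q k * qpoch q q k.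
Proof.
have := qcosh_gap_shift 0 k.
by rewrite !add0n qcosh_gap_diag big_ord0 qpoch0 expr0z !mulr1 mul1r.
Qed.

Lemma qcosh_gap_qpoch k m : (0 < m <= k)%N -> qpoch q q (m + m) != 0 ->
  qcosh_gap k m * ((-1) ^+ (k - m) * q ^ tri k * (q ^ tri m * (1 + q ^- m))) =
  qpoch q q (k - m) * qpoch q q (k + m).
Proof.
case/andP => m_gt0 le_mk nz; apply: (mulIf nz).
have := qcosh_gap_shift m (k - m).
rewrite subnKC // -addnA subnKC // [(m + k)%N]addnC => shift.
transitivity (qcosh_gap k m * ((-1) ^+ (k - m) * q ^ tri k) * qpoch q q (m + m)
              * (q ^ tri m * (1 + q ^- m))); first by ring.
by rewrite shift -(qcosh_gap_diag_qpoch m_gt0); ring.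
Qed.

Lemma Rkj0 k : Rkj k 0 q = - ((-1) ^+ k * q ^ tri k / (qpoch q q k * qpoch q q k)).
Proof. by rewrite /Rkj subr0 (_ : tri 0 = 0) // add0r. Qed.

Lemma Rkj_sym k m : (m <= k)%N ->
  Rkj k m q + Rkj k (- m%:Z) q =
  - ((-1) ^+ (k - m) * q ^ tri k * (q ^ tri m * (1 + q ^- m))
     / (qpoch q q (k - m) * qpoch q q (k + m))).
Proof.
move=> le_mk.
have sign : (-1) ^ (k%:Z + m%:Z) = (-1) ^+ (k - m) :> F.
  by rewrite -PoszD -exprnP -[LHS]signr_odd oddD -oddB // signr_odd.
have signN : (-1) ^ (k%:Z + - m%:Z) = (-1) ^+ (k - m) :> F by rewrite subzn.
rewrite /Rkj opprK triN sign signN -PoszD subzn // !absz_nat !expfzDr // -exprnN !invfM.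
ring.
Qed.

Section Weights.
Variable k : nat.
Hypothesis qpoch_neq0 : forall n, (n <= 2 * k)%N -> qpoch q q n != 0.

Lemma qcosh_inj : injective (fun i : 'I_k.+1 => qcosh i).
Proof.
have one_subX_neq0 t : (0 < t <= 2 * k)%N -> 1 - q ^+ t != 0.
  case: t => // t /andP[_ le_t]; rewrite exprS.
  exact: (qpoch_factor_neq0 (qpoch_neq0 le_t)).
have gap_neq0 (i j : 'I_k.+1) : (i < j)%N -> qcosh j - qcosh i != 0.
  move=> lt_ij; have lt_jk := ltn_ord j.
  rewrite (qcosh_sub (ltnW lt_ij)) !mulf_neq0 ?invr_eq0 ?expf_neq0 //.
    by apply: one_subX_neq0; lia.
  by apply: one_subX_neq0; lia.
move=> i j /eqP; apply: contraTeq; rewrite neq_ltn => /orP[] lt.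
  by rewrite eq_sym -subr_eq0 gap_neq0.
by rewrite -subr_eq0 gap_neq0.
Qed.

Lemma inv_qcosh_gap0 : (qcosh_gap k 0)^-1 = - Rkj k 0 q.
Proof.
rewrite Rkj0 opprK; apply: invf_eq_div (qcosh_gap0_qpoch k) _.
by rewrite mulf_neq0 // qpoch_neq0 // leq_pmull.
Qed.

Lemma inv_qcosh_gap m : (0 < m <= k)%N ->
  (qcosh_gap k m)^-1 = - (Rkj k m q + Rkj k (- m%:Z) q).
Proof.
move=> /andP[m_gt0 le_mk]; rewrite Rkj_sym // opprK.
apply: invf_eq_div; first by rewrite qcosh_gap_qpoch ?m_gt0 ?qpoch_neq0 //; lia.
by rewrite mulf_neq0 // qpoch_neq0 //; lia.
Qed.

Lemma inv_prod_qcosh y : (forall m, (m <= k)%N -> y != qcosh m) ->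
  (\prod_(m < k.+1) (y - qcosh m))^-1 =
  \sum_(m < k.+1) (qcosh_gap k m)^-1 / (y - qcosh m).
Proof.
move=> y_neq; rewrite (partial_fractions qcosh_inj) => [|i]; last exact: y_neq _ (ltn_ord i).
by apply: eq_bigr.
Qed.

End Weights.

Lemma qpoch_pair_prod x k : x != 0 ->
  qpoch x q k.+1 * qpoch (q / x) q k * (1 - x^-1) =
  - ((-1) ^+ k * q ^ tri k) * \prod_(m < k.+1) (x + x^-1 - qcosh m).
Proof.
move=> x_neq0; elim: k => [|k IH].
  rewrite /qpoch !big_ord1 big_ord0 (_ : tri 0 = 0) // /qcosh !expr0 expr0z invr1.
  by field.
rewrite qpochS [qpoch (q / x) q k.+1]qpochS expz_triS big_ord_recr /=.
transitivity (qpoch x q k.+1 * qpoch (q / x) q k * (1 - x^-1)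
              * ((1 - x * q ^+ k.+1) * (1 - q / x * q ^+ k))); first by ring.
rewrite IH /qcosh !exprS.
have qk_neq0 : q ^+ k != 0 by rewrite expf_neq0.
by field; rewrite x_neq0 q_neq0 qk_neq0.
Qed.

Lemma tsigmaE x k : x != 0 -> x != 1 ->
  tsigma k x q = - (1 - x^-1) * (\prod_(m < k.+1) (x + x^-1 - qcosh m))^-1.
Proof.
move=> x_neq0 x_neq1.
have u_neq0 : 1 - x^-1 != 0 by rewrite subr_eq0 eq_sym invr_eq1.
have s_neq0 : (-1) ^+ k * q ^ tri k != 0.
  by rewrite mulf_neq0 ?expfz_neq0 // signr_eq0.
have := congr1 (fun z => z / (1 - x^-1)) (qpoch_pair_prod k x_neq0).
rewrite /= mulfK // /tsigma => ->.
by rewrite invf_div mulrCA invfM invrN !mulNr mulrN mulVKf // mulrN.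
Qed.

End QAnalogues.

Theorem lemma5p3 (F : fieldType) (k : nat) (x q : F)
  (hx : x != 0) (hq : q != 0)
  (h1 : qpoch x q k.+1 != 0) (h2 : qpoch (q / x) q k != 0)
  (h3 : forall n : nat, (n <= 2 * k)%N -> qpoch q q n != 0)
  (h4 : forall j : int, - (k%:Z) <= j <= k%:Z ->
          x + x^-1 - q ^ j - q ^ (- j) != 0) :
  tsigma k x q =
  (1 - x^-1) * \sum_(i < (2 * k).+1)
     Rkj k (i%:Z - k%:Z) q
       / (x + x^-1 - q ^ (i%:Z - k%:Z) - q ^ (- (i%:Z - k%:Z))).
Proof.
have x_neq1 : x != 1.
  by have := qpoch_factor_neq0 h1 (ltn0Sn k); rewrite expr0 mulr1 subr_eq0 eq_sym.
have y_neq m : (m <= k)%N -> x + x^-1 != qcosh q m.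
  by move=> le_mk; rewrite -subr_eq0 -sub_exprz_qcosh h4 //; lia.
rewrite (tsigmaE hq k hx x_neq1) (inv_prod_qcosh hq h3 y_neq) big_ord_recl.
rewrite (sum_centered (fun j => Rkj k j q / (x + x^-1 - q ^ j - q ^ (- j)))).
rewrite (inv_qcosh_gap0 hq h3) sub_exprz_qcosh.
under eq_bigr => i _ do rewrite lift0 (inv_qcosh_gap hq h3 (m := i.+1) (ltn_ord i)).
under [in RHS]eq_bigr => i _ do rewrite sub_exprz_qcosh sub_exprNz_qcosh -mulrDl.
under eq_bigr do rewrite mulNr.
by rewrite sumrN [- Rkj _ _ _ / _]mulNr -opprD mulrNN.
Qed.
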